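(* Let $\mathbf a=(a_1,\dots,a_k)$ be a sequence of nonnegative integers and $1\le j\le k$. There is a bijection between $D_j(a_1,\dots,a_k)$ and $D_j^*(a_1,\dots,a_{j-1},a_j+1,a_{j+1},\dots,a_k)$.
   Context: For $\mathbf a=(a_1,\dots,a_k)$ with nonnegative integer entries summing to $n$, put $c_0=0$, $c_j=a_1+\dots+a_j$, and let the $j$-th block be $A_j=\{c_{j-1}+1,\dots,c_j\}$. Let $S_{\mathbf a}\subseteq S_n$ be the set of permutations $\pi$ of $[n]$ with $\pi_i>\pi_{i+1}$ whenever $i,i+1$ lie in the same block. A fixed point is an $i$ with $\pi_i=i$. $D_j(\mathbf a)$ is the set of permutations in $S_{\mathbf a}$ with no fixed point in $A_1\cup\dots\cup A_j$; $D^*_j(\mathbf a)$ is the set of permutations in $S_{\mathbf a}$ with no fixed point in $A_1\cup\dots\cup A_{j-1}$ but with a fixed point in $A_j$. *)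

From mathcomp Require Import all_boot all_fingroup.
Set Implicit Arguments. Unset Strict Implicit. Unset Printing Implicit Defensive.

(* Positions are 0-based: position i : 'I_n corresponds to i+1 in [n].
   Fixed points and descents are invariant under this shift. *)

Definition cpart (a : seq nat) (j : nat) : nat := sumn (take j a).

(* 0-based position i lies in block A_j (1-based j), i.e. c_{j-1} <= i < c_j *)
Definition in_block (a : seq nat) (j i : nat) : bool :=
  (cpart a j.-1 <= i) && (i < cpart a j) && (0 < j).

Definition S_a (a : seq nat) : {set 'S_(sumn a)} :=
  [set s : 'S_(sumn a) | [forall i : 'I_(sumn a), forall i' : 'I_(sumn a),
     ((i'  : nat) == i.+1) ==>
     [exists j : 'I_(size a).+1, in_block a j i && in_block a j i'] ==>
     (s i' < s i)]].

Definition D_set (a : seq nat) (j : nat) : {set 'S_(sumn a)} :=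
  [set s in S_a a | [forall i : 'I_(sumn a), (i < cpart a j) ==> (s i != i)]].

Definition Dstar_set (a : seq nat) (j : nat) : {set 'S_(sumn a)} :=
  [set s in S_a a | [forall i : 'I_(sumn a), (i < cpart a j.-1) ==> (s i != i)]
                    && [exists i : 'I_(sumn a), in_block a j i && (s i == i)]].

From mathcomp Require Import all_boot all_fingroup zify.
Set Implicit Arguments. Unset Strict Implicit. Unset Printing Implicit Defensive.

(* A permutation t of D_j(a) decreases along the block A_j and has no fixed
   point there, so there is exactly one cut p of the block, c_{j-1} <= p <= c_j,
   with t i >= p for the positions i < p of A_j and t i < p for those i >= p.
   Inserting a new fixed point at p (and renumbering) keeps the enlarged block
   decreasing, hence lands in D*_j of the enlarged sequence.  Conversely a
   permutation of D*_j has a single fixed point in its decreasing j-th block,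
   and deleting it gives back a permutation of D_j for which that point is the
   cut. *)

(* The sets of the statement, over an arbitrary cut sequence c in place of
   cpart a; replacing a_j by a_j + 1 then just shifts c k by (j <= k). *)
Definition cut_block (c : nat -> nat) (k i : nat) : bool :=
  (c k.-1 <= i) && (i < c k) && (0 < k).

Definition S_cut n (c : nat -> nat) (sz : nat) : {set 'S_n} :=
  [set s : 'S_n | [forall i : 'I_n, forall i' : 'I_n,
     ((i' : nat) == i.+1) ==>
     [exists k : 'I_sz.+1, cut_block c k i && cut_block c k i'] ==> (s i' < s i)]].

Definition D_cut n (c : nat -> nat) (sz j : nat) : {set 'S_n} :=
  [set s in S_cut n c sz | [forall i : 'I_n, (i < c j) ==> (s i != i)]].

Definition Dstar_cut n (c : nat -> nat) (sz j : nat) : {set 'S_n} :=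
  [set s in S_cut n c sz | [forall i : 'I_n, (i < c j.-1) ==> (s i != i)]
                    && [exists i : 'I_n, cut_block c j i && (s i == i)]].

Lemma D_set_cut a j : D_set a j = D_cut (sumn a) (cpart a) (size a) j.
Proof. by []. Qed.

Lemma Dstar_set_cut a j : Dstar_set a j = Dstar_cut (sumn a) (cpart a) (size a) j.
Proof. by []. Qed.

Lemma cpart_mono a : {homo cpart a : k k' / k <= k'}.
Proof. by move=> k k' le_kk'; rewrite /cpart -(subnKC le_kk') takeD sumn_cat leq_addr. Qed.

Lemma cpart_le_sumn a k : cpart a k <= sumn a.
Proof. by rewrite /cpart -{2}(cat_take_drop k a) sumn_cat leq_addr. Qed.

Lemma cpart_set_nth_succ a i k : i < size a ->
  cpart (set_nth 0 a i (nth 0 a i).+1) k = cpart a k + (i < k).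
Proof.
rewrite /cpart; elim: a i k => [|h t IH] i k //= lt_i.
case: k => [|k] /=; first by case: i {lt_i}.
case: i lt_i => [|i] lt_i /=; first by rewrite addSn addn1.
by rewrite IH // addnA.
Qed.

Lemma ltn_bump2 h x y : (bump h x < bump h y) = (x < y).
Proof. by rewrite !ltnNge leq_bump2. Qed.

Lemma ltn_bump_self p y : (bump p y < p) = (y < p).
Proof. by rewrite /bump; case: (leqP p _) => h; apply/idP/idP; lia. Qed.

Lemma ltn_self_bump p z : (p < bump p z) = (p <= z).
Proof. by rewrite /bump; case: (leqP p _) => h; apply/idP/idP; lia. Qed.

Lemma cut_block_between c k i i' m :
  cut_block c k i -> cut_block c k i' -> i <= m <= i' -> cut_block c k m.
Proof. by rewrite /cut_block; lia. Qed.

Lemma cut_block_uniq (c : nat -> nat) k k' i : {homo c : m m' / m <= m'} ->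
  cut_block c k i -> cut_block c k' i -> k = k'.
Proof.
move=> c_mono /andP[/andP[lo hi] k_gt0] /andP[/andP[lo' hi'] k'_gt0].
case: (ltngtP k k') => // lt.
  have /c_mono : k <= k'.-1 by lia.
  lia.
have /c_mono : k' <= k.-1 by lia.
lia.
Qed.

Definition block_decreasing n (c : nat -> nat) (sz : nat) (s : 'S_n) : Prop :=
  forall k, k <= sz -> forall i i' : 'I_n, i < i' ->
    cut_block c k i -> cut_block c k i' -> s i' < s i.

Lemma S_cutP n c sz (s : 'S_n) :
  reflect (block_decreasing c sz s) (s \in S_cut n c sz).
Proof.
rewrite inE; apply: (iffP forallP) => [adj k le_k i i' lt_ii' bi bi' | dec i].
  have step (m m' : 'I_n) : m' = m.+1 :> nat ->
      cut_block c k m -> cut_block c k m' -> s m' < s m.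
    move=> e bm bm'; move/forallP: (adj m) => /(_ m') /implyP /(_ (introT eqP e)).
    by move/implyP; apply; apply/existsP; exists (Ordinal (le_k : k < sz.+1)); rewrite bm bm'.
  suff desc d (m' : 'I_n) : m' = i + d.+1 :> nat -> cut_block c k m' -> s m' < s i.
    by apply: (desc (i' - i).-1 i') bi'; lia.
  elim: d m' => [|d IH] m' e bm'; first by apply: step => //; rewrite e addn1.
  have lt_mn : i + d.+1 < n by have := ltn_ord m'; lia.
  have bm : cut_block c k (Ordinal lt_mn) by apply: cut_block_between bi bm' _ => /=; lia.
  have e' : m' = (Ordinal lt_mn).+1 :> nat by rewrite e /= addnS.
  exact: ltn_trans (step _ _ e' bm bm') (IH (Ordinal lt_mn) erefl bm).
apply/forallP => i'; apply/implyP => /eqP e; apply/implyP => /existsP[k /andP[bi bi']].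
by apply: (dec k (ltn_ord k) i i') => //; rewrite e.
Qed.

Lemma block_decreasing_le n c sz (s : 'S_n) k (i i' : 'I_n) :
  block_decreasing c sz s -> k <= sz -> i <= i' ->
  cut_block c k i -> cut_block c k i' -> s i' <= s i.
Proof.
move=> dec le_k; rewrite leq_eqVlt => /orP[/eqP/val_inj-> // | lt_ii'] bi bi'.
exact/ltnW/(dec k).
Qed.

Lemma block_decreasing_fixed_uniq n c sz (s : 'S_n) k (x x' : 'I_n) :
  block_decreasing c sz s -> k <= sz -> cut_block c k x -> cut_block c k x' ->
  s x = x -> s x' = x' -> x = x'.
Proof.
move=> dec le_k bx bx' sx sx'; case: (ltngtP x x') => [lt|lt|/val_inj //].
  by have := dec k le_k _ _ lt bx bx'; rewrite sx sx'; lia.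
by have := dec k le_k _ _ lt bx' bx; rewrite sx sx'; lia.
Qed.

Lemma lift_perm_of_fixed n (s : 'S_n.+1) q :
  s q = q -> exists t : 'S_n, s = lift_perm q q t.
Proof.
move=> sq.
pose f (k : 'I_n) := odflt k (unlift q (s (lift q k))).
have liftf k : lift q (f k) = s (lift q k).
  rewrite /f; case: unliftP => [y -> // | e]; exfalso.
  by move: e; rewrite -{2}sq => /perm_inj /eqP; rewrite eq_sym (negbTE (neq_lift q k)).
have f_inj : injective f.
  by move=> x y e; apply: (@lift_inj _ q); apply: (@perm_inj _ s); rewrite -!liftf e.
exists (perm f_inj); apply/permP => x; case: (unliftP q x) => [y|] ->.
  by rewrite lift_perm_lift permE liftf.
by rewrite lift_perm_id sq.
Qed.

Lemma card_bijective (T1 T2 : finType) :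
  #|T1| = #|T2| -> exists f : T1 -> T2, bijective f.
Proof.
move=> e; exists (fun x => enum_val (cast_ord e (enum_rank x))).
exists (fun y => enum_val (cast_ord (esym e) (enum_rank y))) => [x|y] /=.
  by rewrite enum_valK cast_ordK enum_rankK.
by rewrite enum_valK cast_ordKV enum_rankK.
Qed.

Section InsertFixedPoint.
Variables (n : nat) (c c' : nat -> nat) (sz j : nat).
Hypotheses (c_mono : {homo c : k k' / k <= k'}) (c_le : forall k, c k <= n)
  (c'E : forall k, c' k = c k + (j <= k)) (j_gt0 : 0 < j) (j_le : j <= sz).

Lemma c'_mono : {homo c' : k k' / k <= k'}.
Proof. by move=> k k' /[dup] /c_mono le_c le_kk'; rewrite !c'E; lia. Qed.

Lemma c'_pred : c' j.-1 = c j.-1.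
Proof. by rewrite c'E [j <= _]leqNgt ltn_predL j_gt0 addn0. Qed.

Lemma cut_block_enlarged p : cut_block c' j p = (c j.-1 <= p <= c j).
Proof.
have /c_mono : j.-1 <= j by exact: leq_pred.
by rewrite /cut_block !c'E j_gt0 => le_c; apply/idP/idP; lia.
Qed.

Lemma cut_block_bump p k y : c j.-1 <= p <= c j ->
  cut_block c' k (bump p y) = cut_block c k y.
Proof.
move=> p_range; rewrite /cut_block !c'E /bump.
case: (ltngtP k j) => [lt_kj | lt_jk | ->].
- have /c_mono : k <= j.-1 by lia.
  case: (leqP p y) => le_py le_c; apply/idP/idP; lia.
- have /c_mono : j <= k.-1 by lia.
  case: (leqP p y) => le_py le_c; apply/idP/idP; lia.
- case: (leqP p y) => le_py; apply/idP/idP; lia.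
Qed.

Definition split_point (t : 'S_n) (p : nat) : bool :=
  (c j.-1 <= p <= c j) &&
  [forall y : 'I_n, cut_block c j y ==> ((y < p) == (p <= t y))].

Lemma split_pointE t p (y : 'I_n) :
  split_point t p -> cut_block c j y -> (y < p) = (p <= t y).
Proof. by move=> /andP[_ /forallP/(_ y)/implyP sp] /sp/eqP. Qed.

Lemma split_point_block t p : split_point t p -> cut_block c' j p.
Proof. by rewrite cut_block_enlarged => /andP[]. Qed.

Lemma split_point_uniq t p q : split_point t p -> split_point t q -> p = q.
Proof.
wlog lt_pq : p q / p < q.
  by move=> wlog sp sq; case: (ltngtP p q) => [lt|lt|//]; [|symmetry]; apply: wlog.
move=> sp sq; have /andP[/andP[p_ge _] _] := sp; have /andP[/andP[_ q_le] _] := sq.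
have p_lt_n : p < n by have := c_le j; lia.
have bp : cut_block c j (Ordinal p_lt_n) by rewrite /cut_block /= p_ge j_gt0; lia.
have := split_pointE sp bp; have := split_pointE sq bp; rewrite /= ltnn lt_pq.
lia.
Qed.

Lemma split_point_no_fixed t p (y : 'I_n) :
  split_point t p -> cut_block c j y -> t y != y.
Proof.
move=> sp yb; apply/eqP => ty.
by have := split_pointE sp yb; rewrite ty ltnNge; case: leqP.
Qed.

Lemma split_point_exists t : t \in D_cut n c sz j -> exists p, split_point t p.
Proof.
rewrite inE => /andP[/S_cutP t_dec /forallP t_nofix].
have c_pred : c j.-1 <= c j by apply: c_mono; exact: leq_pred.
(* p is the first position of the block where t drops below the diagonal. *)
pose stop m := (c j.-1 <= m) &&
  ((c j <= m) || [exists y : 'I_n, (y == m :> nat) && (t y < y)]).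
have stop_cj : stop (c j) by rewrite /stop c_pred leqnn.
have [p /andP[p_ge p_stop] p_min] := ex_minnP (ex_intro stop _ stop_cj).
have p_le := p_min _ stop_cj.
have exceed (y : 'I_n) : c j.-1 <= y < p -> y < t y.
  move=> /andP[y_ge y_lt]; have := t_nofix y; rewrite (leq_trans y_lt p_le) /=.
  case: (ltngtP (t y) y) => // [ty_lt _ | /val_inj -> ]; last by rewrite eqxx.
  have : stop y by rewrite /stop y_ge; apply/orP; right; apply/existsP; exists y; rewrite eqxx.
  by move/p_min; lia.
exists p; rewrite /split_point p_ge p_le /=.
apply/forallP => y; apply/implyP => yb; apply/eqP.
have /andP[/andP[y_ge y_lt] _] := yb.
case: (ltnP y p) => [lt_yp | le_py].
- have last_lt_n : p.-1 < n by have := c_le j; lia.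
  have bl : cut_block c j (Ordinal last_lt_n) by rewrite /cut_block /= j_gt0; lia.
  have := exceed (Ordinal last_lt_n) ltac:(rewrite /=; lia).
  have : y <= Ordinal last_lt_n by rewrite /=; lia.
  move/(block_decreasing_le t_dec j_le)/(_ yb bl) => /=; lia.
- move: p_stop; rewrite leqNgt (leq_ltn_trans le_py y_lt) /=.
  case/existsP => y0 /andP[/eqP y0_p ty0_lt].
  have b0 : cut_block c j y0 by rewrite /cut_block y0_p p_ge j_gt0; lia.
  have : y0 <= y by rewrite y0_p.
  move/(block_decreasing_le t_dec j_le)/(_ b0 yb); lia.
Qed.

Lemma insert_fixed_point t (p : 'I_n.+1) : t \in D_cut n c sz j -> split_point t p ->
  lift_perm p p t \in Dstar_cut n.+1 c' sz j.
Proof.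
rewrite inE => /andP[/S_cutP t_dec /forallP t_nofix] sp.
have bp := split_point_block sp; have /andP[p_range _] := sp.
have /andP[p_ge _] := p_range.
rewrite inE; apply/and3P; split.
- apply/S_cutP => k le_k x x' lt_xx' bx bx'.
  case: (unliftP p x) => [y ex|ex]; case: (unliftP p x') => [y' ex'|ex'];
    move: lt_xx' bx bx'; rewrite ex ex' ?lift_perm_lift ?lift_perm_id /= ?ltnn //.
  + rewrite ltn_bump2 !cut_block_bump // => lt yb yb'.
    by rewrite ltn_bump2; apply: t_dec le_k _ _ lt yb yb'.
  + move=> lt yb /(cut_block_uniq c'_mono bp) kj; move: yb; rewrite -kj cut_block_bump //.
    by move/(split_pointE sp); rewrite ltn_self_bump -ltn_bump_self => <-.
  + move=> lt pb yb'; have kj := cut_block_uniq c'_mono pb bp.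
    have ge_y'p : (y' < p) = false by rewrite ltnNge -ltn_self_bump lt.
    move: yb'; rewrite kj cut_block_bump // => /(split_pointE sp).
    by rewrite ge_y'p ltn_bump_self ltnNge => <-.
- apply/forallP => x; apply/implyP; rewrite c'_pred.
  case: (unliftP p x) => [y ->|->]; last by rewrite ltnNge p_ge.
  rewrite lift_perm_lift (inj_eq lift_inj) /= => lt; apply: (implyP (t_nofix y)).
  by rewrite /bump in lt; lia.
- by apply/existsP; exists p; rewrite bp lift_perm_id eqxx.
Qed.

Lemma delete_fixed_point t (q : 'I_n.+1) :
  lift_perm q q t \in Dstar_cut n.+1 c' sz j -> cut_block c' j q ->
  t \in D_cut n c sz j /\ split_point t q.
Proof.
rewrite inE => /and3P[/S_cutP s_dec /forallP s_nofix _].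
rewrite cut_block_enlarged => q_range; have /andP[q_ge q_le] := q_range.
have bq : cut_block c' j q by rewrite cut_block_enlarged.
have t_dec : block_decreasing c sz t.
  move=> k le_k y y' lt yb yb'; rewrite -(ltn_bump2 q).
  have := s_dec k le_k (lift q y) (lift q y'); rewrite !lift_perm_lift /=.
  by apply; rewrite ?ltn_bump2 ?cut_block_bump.
have sp : split_point t q.
  rewrite /split_point q_range; apply/forallP => y; apply/implyP => yb; apply/eqP.
  have yb' : cut_block c' j (lift q y) by rewrite /= cut_block_bump.
  case: (ltnP y q) => [lt_yq | le_qy].
  - have := s_dec j j_le (lift q y) q; rewrite lift_perm_lift lift_perm_id /=.
    by rewrite ltn_bump_self ltn_self_bump lt_yq => ->.
  - have := s_dec j j_le q (lift q y); rewrite lift_perm_lift lift_perm_id /=.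
    by rewrite ltn_self_bump ltn_bump_self le_qy ltnNge => /(_ isT bq yb') /negbTE.
split=> //; rewrite inE; apply/andP; split; first exact/S_cutP.
apply/forallP => y; apply/implyP => lt_yc.
case: (ltnP y (c j.-1)) => [lt_yc' | ge_yc'].
  have := s_nofix (lift q y); rewrite lift_perm_lift (inj_eq lift_inj) => /implyP; apply.
  by rewrite /= c'_pred /bump; lia.
by apply: split_point_no_fixed sp _; rewrite /cut_block ge_yc' lt_yc j_gt0.
Qed.

Definition insert_split (t : 'S_n) : 'S_n.+1 :=
  let p := odflt ord0 [pick p : 'I_n.+1 | split_point t p] in lift_perm p p t.

Lemma insert_splitE t (p : 'I_n.+1) :
  split_point t p -> insert_split t = lift_perm p p t.
Proof.
move=> sp; rewrite /insert_split; case: pickP => [p' sp' | /(_ p)]; last by rewrite sp.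
by rewrite (_ : p' = p) //; apply/val_inj/(split_point_uniq sp' sp).
Qed.

Lemma insert_splitP t : t \in D_cut n c sz j ->
  exists2 p : 'I_n.+1, split_point t p & insert_split t = lift_perm p p t.
Proof.
move=> tD; have [p sp] := split_point_exists tD.
have /andP[/andP[_ p_le] _] := sp.
have p_lt : p < n.+1 by have := c_le j; lia.
by exists (Ordinal p_lt) => //; exact: insert_splitE.
Qed.

Lemma insert_split_inj : {in D_cut n c sz j &, injective insert_split}.
Proof.
move=> t1 t2 t1D t2D; have [p1 sp1 ->] := insert_splitP t1D.
have [p2 sp2 ->] := insert_splitP t2D => e.
have /S_cutP s_dec : lift_perm p1 p1 t1 \in S_cut n.+1 c' sz.
  by have := insert_fixed_point t1D sp1; rewrite inE => /andP[].
have ep : p1 = p2.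
  apply: (block_decreasing_fixed_uniq s_dec j_le (split_point_block sp1)
                                       (split_point_block sp2)).
    by rewrite lift_perm_id.
  by rewrite e lift_perm_id.
subst p2; apply/permP => y; apply: (@lift_inj _ p1).
by rewrite -(lift_perm_lift p1 p1 t1) -(lift_perm_lift p1 p1 t2) e.
Qed.

Lemma card_D_cut_Dstar_cut : #|D_cut n c sz j| = #|Dstar_cut n.+1 c' sz j|.
Proof.
suff <- : insert_split @: D_cut n c sz j = Dstar_cut n.+1 c' sz j.
  by rewrite (card_in_imset insert_split_inj).
apply/setP => s; apply/imsetP/idP => [[t tD ->] | sD].
  by have [p sp ->] := insert_splitP tD; apply: insert_fixed_point.
move: (sD); rewrite inE => /and3P[_ _ /existsP[q /andP[qb /eqP sq]]].
have [t et] := lift_perm_of_fixed sq; rewrite et in sD.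
have [tD sp] := delete_fixed_point sD qb.
by exists t; rewrite // et (insert_splitE sp).
Qed.

End InsertFixedPoint.

Theorem mainTheorem8 (a : seq nat) (j : nat) :
  1 <= j <= size a ->
  exists f : {s : 'S_(sumn a) | s \in D_set a j} ->
             {t : 'S_(sumn (set_nth 0 a j.-1 (nth 0 a j.-1).+1)) |
                t \in Dstar_set (set_nth 0 a j.-1 (nth 0 a j.-1).+1) j},
    bijective f.
Proof.
move=> /andP[j_gt0 j_le]; set a' := set_nth 0 a j.-1 _.
have lt_j1 : j.-1 < size a by rewrite prednK.
have cpart_a' k : cpart a' k = cpart a k + (j <= k).
  by rewrite cpart_set_nth_succ // -[in RHS](prednK j_gt0).
have size_a' : size a' = size a by rewrite size_set_nth; apply/maxn_idPr.
have sumn_a' : sumn a' = (sumn a).+1.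
  have := cpart_a' (size a); rewrite /cpart take_oversize ?size_a' //.
  by rewrite take_oversize // j_le addn1.
apply: card_bijective; rewrite !card_sig D_set_cut Dstar_set_cut size_a' sumn_a'.
apply: card_D_cut_Dstar_cut => //; [exact: cpart_mono | exact: cpart_le_sumn].
Qed.
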